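(* Let $0\le b\le1$, $M>0$ and $0\le\alpha<1$, and let $r_0=r_0(\alpha)$ be the real root in $(0,1)$ of the equation \[\big((1-\alpha)(1+M)-2(2-\alpha)(2b-M)r\big)(1-r)^3=M\big(1-\alpha+(1+\alpha)r\big).\] Let $\mathcal{F}$ be the class of functions $f\in\mathcal{A}_b$, $f(z)=z+\sum_{n\ge2}a_nz^n$, with $|a_n|\le M$ for all $n\ge3$. Then: (i) every $f\in\mathcal{F}$ satisfies $\left|\frac{zf''(z)}{f'(z)}\right|\le1-\alpha$ for $|z|\le r_0$; (ii) $r_0(\alpha)$ is the radius of convexity of order $\alpha$ of $\mathcal{F}$; (iii) $r_0(1/2)$ is the radius of uniform convexity of $\mathcal{F}$. All results are sharp, with extremal function $f_0(z)=z-2bz^2-\frac{Mz^3}{1-z}$.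
   Context: $\mathbb{D}=\{z\in\mathbb{C}:|z|<1\}$. For $0\le b\le1$, $\mathcal{A}_b$ is the class of analytic functions $f$ on $\mathbb{D}$ of the form $f(z)=z+a_2z^2+a_3z^3+\cdots$ with $|a_2|=2b$. For a class $\mathcal{F}$ of analytic functions on $\mathbb{D}$ normalized by $f(0)=0$, $f'(0)=1$, and $0\le\alpha<1$, the radius of convexity of order $\alpha$ of $\mathcal{F}$ is the supremum of $r\in(0,1]$ such that every $f\in\mathcal{F}$ satisfies $f'(z)\ne0$ and $\operatorname{Re}\big(1+zf''(z)/f'(z)\big)>\alpha$ for $|z|<r$. The radius of uniform convexity of $\mathcal{F}$ is the supremum of $r\in(0,1]$ such that every $f\in\mathcal{F}$ satisfies $f'(z)\ne0$ and $\operatorname{Re}\big(1+zf''(z)/f'(z)\big)>\left|zf''(z)/f'(z)\right|$ for $|z|<r$. *)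

From Stdlib Require Import Reals.
From Coquelicot Require Import Coquelicot.
Open Scope R_scope.

Definition taylor_on_disk (a : nat -> C) (f : C -> C) : Prop :=
  forall z : C, Cmod z < 1 -> is_series (fun n => (a n * pow_n z n)%C) (f z).

Definition in_A (b : R) (f : C -> C) : Prop :=
  exists a : nat -> C,
    taylor_on_disk a f /\ a 0%nat = 0%C /\ a 1%nat = 1%C /\ Cmod (a 2%nat) = 2 * b.

Definition class_F (b M : R) (f : C -> C) : Prop :=
  exists a : nat -> C,
    taylor_on_disk a f /\ a 0%nat = 0%C /\ a 1%nat = 1%C /\ Cmod (a 2%nat) = 2 * b /\
    (forall n : nat, (3 <= n)%nat -> Cmod (a n) <= M).

Definition derivs_on_disk (f f1 f2 : C -> C) : Prop :=
  forall z : C, Cmod z < 1 -> is_derive f z (f1 z) /\ is_derive f1 z (f2 z).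

Definition convex_order_on (F : (C -> C) -> Prop) (alpha r : R) : Prop :=
  forall f f1 f2 : C -> C, F f -> derivs_on_disk f f1 f2 ->
    forall z : C, Cmod z < r ->
      f1 z <> 0%C /\ alpha < Re (1 + z * f2 z / f1 z)%C.

Definition unif_convex_on (F : (C -> C) -> Prop) (r : R) : Prop :=
  forall f f1 f2 : C -> C, F f -> derivs_on_disk f f1 f2 ->
    forall z : C, Cmod z < r ->
      f1 z <> 0%C /\ Cmod (z * f2 z / f1 z)%C < Re (1 + z * f2 z / f1 z)%C.

Definition radius_convexity (F : (C -> C) -> Prop) (alpha : R) : Rbar :=
  Lub_Rbar (fun r => 0 < r <= 1 /\ convex_order_on F alpha r).

Definition radius_unif_convexity (F : (C -> C) -> Prop) : Rbar :=
  Lub_Rbar (fun r => 0 < r <= 1 /\ unif_convex_on F r).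

Definition r0_eq (b M alpha r : R) : Prop :=
  ((1 - alpha) * (1 + M) - 2 * (2 - alpha) * (2 * b - M) * r) * (1 - r) ^ 3
  = M * (1 - alpha + (1 + alpha) * r).

(* r0 is "the" real root in (0,1): a root in (0,1) with no smaller root in (0,1). *)
Definition is_r0 (b M alpha r0 : R) : Prop :=
  0 < r0 < 1 /\ r0_eq b M alpha r0 /\ (forall r, 0 < r < r0 -> ~ r0_eq b M alpha r).

Definition f0 (b M : R) (z : C) : C :=
  (z - RtoC (2 * b) * z * z - RtoC M * (z * z * z) / (1 - z))%C.

From Stdlib Require Import Reals Lra Lia Psatz ClassicalEpsilon.
From Coquelicot Require Import Coquelicot.
Open Scope R_scope.

(* For f in the class, f'(z) - 1 and z f''(z) are power series whose coefficients are
   bounded by those of the real majorants 4 b r + M (1/(1-r)^2 - 1 - 2 r) and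
   4 b r + M r (2/(1-r)^3 - 2), r = |z|.  Hence |z f''/f'| is at most the ratio of the
   second majorant to one minus the first, and this ratio is <= 1 - alpha exactly when
   the polynomial defining r0 is nonnegative, i.e. for r <= r0.  The extremal function f0
   has all coefficients (after the first) real and of the same sign, so at z = r0 the
   estimates are equalities and z f''/f' = -(1 - alpha); there Re (1 + z f''/f') = alpha,
   which gives sharpness of the radius of convexity, and for alpha = 1/2 also
   Re (1 + w) = |w|, the boundary of uniform convexity (|w| < 1/2 implies Re (1 + w) > |w|). *)

Lemma is_lim_seq_succ_ratio_pow (p : nat) :
  is_lim_seq (fun n => ((INR n + 2) / (INR n + 1)) ^ p) 1.
Proof.
  assert (Hratio : is_lim_seq (fun n => (INR n + 2) / (INR n + 1)) 1).
  { apply is_lim_seq_ext with (fun n => 1 + / (INR n + 1)).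
    { intros n. pose proof (pos_INR n). field. lra. }
    replace (Finite 1) with (Rbar_plus 1 0) by (simpl; f_equal; ring).
    apply is_lim_seq_plus'; [apply is_lim_seq_const |].
    assert (Hinf : is_lim_seq (fun n => INR n + 1) p_infty).
    { eapply is_lim_seq_plus; [apply is_lim_seq_INR | apply is_lim_seq_const | reflexivity]. }
    exact (is_lim_seq_inv _ _ Hinf ltac:(discriminate)). }
  induction p as [|p IH]; simpl; [apply is_lim_seq_const |].
  replace (Finite 1) with (Finite (1 * 1)) by (f_equal; ring).
  apply is_lim_seq_mult'; assumption.
Qed.

Lemma ex_series_poly_geom (p : nat) (r : R) : 0 <= r < 1 ->
  ex_series (fun n => (INR n + 1) ^ p * r ^ n).
Proof.
  intros Hr.
  (* D'Alembert needs nonzero terms, so compare with a ratio [s > 0] above [r]. *)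
  set (s := (1 + r) / 2).
  assert (Hs : 0 < s < 1) by (unfold s; lra).
  assert (Hmaj : ex_series (fun n => Rabs ((INR n + 1) ^ p * s ^ n))).
  { apply ex_series_DAlembert with s; [lra | |].
    - intros n. apply Rmult_integral_contrapositive.
      pose proof (pos_INR n). split; apply pow_nonzero; lra.
    - apply is_lim_seq_ext with (fun n => ((INR n + 2) / (INR n + 1)) ^ p * s).
      + intros n. pose proof (pos_INR n). rewrite S_INR.
        assert (0 < (INR n + 1) ^ p) by (apply pow_lt; lra).
        assert (0 < s ^ n) by (apply pow_lt; lra).
        rewrite Rabs_pos_eq.
        * unfold Rdiv. rewrite Rpow_mult_distr, pow_inv.
          replace (INR n + 1 + 1) with (INR n + 2) by ring.
          simpl. field. lra.
        * apply Rle_mult_inv_pos; [| apply Rmult_lt_0_compat; auto].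
          apply Rmult_le_pos; apply pow_le; lra.
      + replace (Finite s) with (Rbar_mult 1 s) by (simpl; f_equal; ring).
        apply is_lim_seq_scal_r, is_lim_seq_succ_ratio_pow. }
  apply (ex_series_le (K := R_AbsRing) (V := R_CompleteNormedModule) _
    (fun n => Rabs ((INR n + 1) ^ p * s ^ n))); [| exact Hmaj].
  intros n. change norm with Rabs. pose proof (pos_INR n).
  rewrite !Rabs_mult, <- !RPow_abs, (Rabs_pos_eq r), (Rabs_pos_eq s) by lra.
  apply Rmult_le_compat_l; [apply pow_le, Rabs_pos |].
  apply pow_incr. unfold s. lra.
Qed.

Lemma Cmod_pow_n (z : C) (n : nat) : Cmod (pow_n z n) = Cmod z ^ n.
Proof.
  induction n as [|n IH]; simpl; [apply Cmod_1 |].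
  change (mult z (pow_n z n)) with (z * pow_n z n)%C.
  rewrite Cmod_mult, IH. reflexivity.
Qed.

Lemma pow_n_RtoC (x : R) (n : nat) : pow_n (RtoC x) n = RtoC (x ^ n).
Proof.
  induction n as [|n IH]; [reflexivity |].
  simpl. rewrite IH. change (mult (RtoC x) (RtoC (x ^ n))) with (RtoC x * RtoC (x ^ n))%C.
  rewrite RtoC_mult. reflexivity.
Qed.

Lemma Cmod_series_le (u : nat -> C) (v : nat -> R) (l : C) (m : R) :
  is_series u l -> is_series v m -> (forall n, Cmod (u n) <= v n) -> Cmod l <= m.
Proof.
  intros Hu Hv Huv.
  assert (Hpartial : forall N, Cmod (sum_n u N) <= sum_n v N).
  { induction N as [|N IH]; rewrite ?sum_O, ?sum_Sn; [apply Huv |].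
    eapply Rle_trans; [apply Cmod_triangle |].
    change (plus (sum_n v N) (v (S N))) with (sum_n v N + v (S N)).
    specialize (Huv (S N)). lra. }
  change (Rbar_le (norm l) m).
  apply (filterlim_le (F := eventually) (fun N => norm (sum_n u N)) (sum_n v)).
  - exists O. intros N _. apply Hpartial.
  - eapply filterlim_comp; [apply Hu | apply filterlim_norm].
  - apply Hv.
Qed.

Lemma Cmod_series_tail_le (u : nat -> C) (v : nat -> R) (l : C) (m : R) (k : nat) :
  (0 < k)%nat -> is_series u l -> is_series v m ->
  (forall n, Cmod (u (k + n)%nat) <= v (k + n)%nat) ->
  Cmod (l - sum_n u (pred k)) <= m - sum_n v (pred k).
Proof.
  intros Hk Hu Hv Huv.
  apply (Cmod_series_le (fun n => u (k + n)%nat) (fun n => v (k + n)%nat)); [| | exact Huv].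
  - apply is_series_incr_n; [exact Hk |].
    change (is_series u ((l - sum_n u (pred k)) + sum_n u (pred k))%C).
    replace ((l - sum_n u (pred k)) + sum_n u (pred k))%C with l by ring. exact Hu.
  - apply is_series_incr_n; [exact Hk |].
    change (is_series v ((m - sum_n v (pred k)) + sum_n v (pred k))).
    replace ((m - sum_n v (pred k)) + sum_n v (pred k)) with m by ring. exact Hv.
Qed.

Lemma Cis_series_unique (u : nat -> C) (l1 l2 : C) :
  is_series u l1 -> is_series u l2 -> l1 = l2.
Proof.
  intros H1 H2.
  exact (filterlim_locally_unique (K := C_AbsRing) (V := C_NormedModule) (F := eventually) _ _ _ H1 H2).
Qed.

Lemma RtoC_is_series (u : nat -> R) (l : R) :
  is_series u l -> is_series (fun n => RtoC (u n)) (RtoC l).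
Proof.
  intros H.
  assert (Hsum : forall N, sum_n (fun n => RtoC (u n)) N = RtoC (sum_n u N)).
  { induction N as [|N IH]; rewrite ?sum_O, ?sum_Sn, ?IH; [reflexivity |].
    change (plus (sum_n u N) (u (S N))) with (sum_n u N + u (S N)).
    rewrite <- RtoC_plus. reflexivity. }
  unfold is_series. apply filterlim_ext with (fun N => RtoC (sum_n u N)).
  { intros N. symmetry. apply Hsum. }
  eapply filterlim_comp; [exact H |].
  intros P [eps Heps]. exists eps. intros y Hy. apply Heps.
  split; [exact Hy | apply ball_center].
Qed.

(* Coquelicot's [Series] is real-valued; complex sums are picked by choice
   (an arbitrary value when the series diverges). *)
Definition csum (u : nat -> C) : C :=
  epsilon (inhabits (RtoC 0)) (fun l : C => is_series u l).

Lemma csum_correct (u : nat -> C) : ex_series u -> is_series u (csum u).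
Proof. intros H. unfold csum. apply epsilon_spec. exact H. Qed.

(** * Term-by-term differentiation of complex power series *)

Definition pow_n_remainder (w z : C) (n : nat) : C :=
  (pow_n w n - pow_n z n - (w - z) * RtoC (INR n) * pow_n z (pred n))%C.

Lemma pow_n_remainder_S (w z : C) (n : nat) :
  pow_n_remainder w z (S n) =
  (w * pow_n_remainder w z n + RtoC (INR n) * pow_n z (pred n) * (w - z) * (w - z))%C.
Proof.
  unfold pow_n_remainder.
  change (pow_n w (S n)) with (w * pow_n w n)%C.
  change (pow_n z (S n)) with (z * pow_n z n)%C.
  destruct n as [|n]; simpl pred; rewrite S_INR, RtoC_plus.
  - change (pow_n z 0) with (RtoC 1). change (pow_n w 0) with (RtoC 1). simpl INR. ring.
  - change (pow_n z (S n)) with (z * pow_n z n)%C. ring.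
Qed.

Lemma pow_n_remainder_le (w z : C) (r : R) (n : nat) :
  0 < r -> Cmod w <= r -> Cmod z <= r ->
  r ^ 2 * Cmod (pow_n_remainder w z n) <= INR n ^ 2 * r ^ n * Cmod (w - z) ^ 2.
Proof.
  intros Hr Hw Hz. set (h := Cmod (w - z)).
  assert (Hh : 0 <= h) by apply Cmod_ge_0.
  induction n as [|n IH].
  - unfold pow_n_remainder. simpl. change (@one C_Ring) with (RtoC 1).
    replace (RtoC 1 - RtoC 1 - (w - z) * RtoC 0 * RtoC 1)%C with (RtoC 0) by ring.
    rewrite Cmod_0. lra.
  - assert (Hn := pos_INR n).
    assert (HE := Cmod_ge_0 (pow_n_remainder w z n)).
    assert (Hrn : 0 <= r ^ n) by (apply pow_le; lra).
    assert (Hlast : r ^ 2 * (INR n * Cmod z ^ pred n) <= INR n * r ^ S n).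
    { destruct n as [|n]; simpl pred; [simpl; lra |].
      assert (Cmod z ^ n <= r ^ n) by (apply pow_incr; split; [apply Cmod_ge_0 | lra]).
      replace (INR (S n) * r ^ S (S n)) with (r ^ 2 * (INR (S n) * r ^ n))
        by (change (r ^ S (S n)) with (r * (r * r ^ n)); ring).
      apply Rmult_le_compat_l; [nra |]. apply Rmult_le_compat_l; lra. }
    rewrite pow_n_remainder_S, S_INR.
    apply Rle_trans with (r ^ 2 * (r * Cmod (pow_n_remainder w z n) + INR n * Cmod z ^ pred n * h ^ 2)).
    { apply Rmult_le_compat_l; [nra |].
      eapply Rle_trans; [apply Cmod_triangle |].
      rewrite !Cmod_mult, Cmod_pow_n, Cmod_R, Rabs_pos_eq by lra. fold h.
      apply Rplus_le_compat; [apply Rmult_le_compat_r; lra | right; ring]. }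
    assert (0 <= h ^ 2) by (apply pow_le; lra).
    assert (0 <= r * r ^ n * h ^ 2) by (apply Rmult_le_pos; [apply Rmult_le_pos |]; lra).
    apply Rle_trans with (r * (INR n ^ 2 * r ^ n * h ^ 2) + INR n * r ^ S n * h ^ 2).
    { replace (r ^ 2 * (r * Cmod (pow_n_remainder w z n) + INR n * Cmod z ^ pred n * h ^ 2))
        with (r * (r ^ 2 * Cmod (pow_n_remainder w z n)) + r ^ 2 * (INR n * Cmod z ^ pred n) * h ^ 2)
        by ring.
      apply Rplus_le_compat; [apply Rmult_le_compat_l; lra | apply Rmult_le_compat_r; auto]. }
    simpl (r ^ S n). nra.
Qed.

Definition poly_bounded (c : nat -> C) (K : R) (p : nat) : Prop :=
  forall n, Cmod (c n) <= K * (INR n + 1) ^ p.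

Definition CPSeries (c : nat -> C) (w : C) : C := csum (fun n => (c n * pow_n w n)%C).

Definition coef_deriv (c : nat -> C) (n : nat) : C := (RtoC (INR (S n)) * c (S n))%C.

Lemma poly_bounded_nonneg (c : nat -> C) (K : R) (p : nat) : poly_bounded c K p -> 0 <= K.
Proof.
  intros Hc. specialize (Hc O). simpl INR in Hc. rewrite Rplus_0_l, pow1 in Hc.
  pose proof (Cmod_ge_0 (c O)). lra.
Qed.

Lemma poly_bounded_coef_deriv (c : nat -> C) (K : R) (p : nat) :
  poly_bounded c K p -> poly_bounded (coef_deriv c) (K * 2 ^ p) (S p).
Proof.
  intros Hc n. pose proof (poly_bounded_nonneg _ _ _ Hc) as HK. pose proof (pos_INR n).
  specialize (Hc (S n)). unfold coef_deriv.
  rewrite Cmod_mult, Cmod_R, Rabs_pos_eq by apply pos_INR.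
  rewrite S_INR in *.
  assert (H2 : (INR n + 1 + 1) ^ p <= 2 ^ p * (INR n + 1) ^ p).
  { rewrite <- Rpow_mult_distr. apply pow_incr. lra. }
  apply Rle_trans with ((INR n + 1) * (K * (INR n + 1 + 1) ^ p)); [apply Rmult_le_compat_l; lra |].
  simpl (_ ^ S p).
  replace (K * 2 ^ p * ((INR n + 1) * (INR n + 1) ^ p))
    with ((INR n + 1) * (K * (2 ^ p * (INR n + 1) ^ p))) by ring.
  apply Rmult_le_compat_l; [lra |]. apply Rmult_le_compat_l; lra.
Qed.

Lemma is_series_CPSeries (c : nat -> C) (K : R) (p : nat) (w : C) :
  poly_bounded c K p -> Cmod w < 1 -> is_series (fun n => (c n * pow_n w n)%C) (CPSeries c w).
Proof.
  intros Hc Hw. apply csum_correct.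
  apply (ex_series_le (K := C_AbsRing) (V := C_CompleteNormedModule) _
           (fun n => K * ((INR n + 1) ^ p * Cmod w ^ n))).
  - intros n. change (Cmod (c n * pow_n w n)%C <= K * ((INR n + 1) ^ p * Cmod w ^ n)).
    rewrite Cmod_mult, Cmod_pow_n, <- Rmult_assoc.
    apply Rmult_le_compat_r; [apply pow_le, Cmod_ge_0 | apply Hc].
  - apply (ex_series_scal_l (K := R_AbsRing) (V := R_NormedModule) K).
    apply ex_series_poly_geom. split; [apply Cmod_ge_0 | exact Hw].
Qed.

Lemma is_derive_of_quadratic_remainder (g : C -> C) (z l : C) (delta B : R) :
  0 < delta ->
  (forall y, Cmod (y - z) < delta -> Cmod (g y - g z - (y - z) * l) <= B * Cmod (y - z) ^ 2) ->
  is_derive g z l.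
Proof.
  intros Hdelta Hrem. split; [apply is_linear_scal_l |].
  intros x Hx.
  apply (is_filter_lim_locally_unique (K := C_AbsRing) (V := AbsRing_NormedModule C_AbsRing)) in Hx.
  subst x. intros eps.
  apply (locally_le_locally_norm (K := C_AbsRing) (V := AbsRing_NormedModule C_AbsRing)).
  assert (Heps := cond_pos eps).
  assert (HB := Rabs_pos B).
  assert (Hd : 0 < Rmin delta (eps / (Rabs B + 1))).
  { apply Rmin_pos; [lra | apply Rdiv_lt_0_compat; lra]. }
  exists (mkposreal _ Hd). intros y Hy. unfold ball_norm in Hy. simpl in Hy.
  change (Cmod (y - z) < Rmin delta (eps / (Rabs B + 1))) in Hy.
  change (Cmod (g y - g z - (y - z) * l) <= eps * Cmod (y - z)).
  set (h := Cmod (y - z)) in *.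
  assert (Hh0 : 0 <= h) by apply Cmod_ge_0.
  assert (Hh1 : h < delta) by (eapply Rlt_le_trans; [apply Hy | apply Rmin_l]).
  assert (Hh2 : h * (Rabs B + 1) < eps).
  { apply (Rmult_lt_reg_r (/ (Rabs B + 1))); [apply Rinv_0_lt_compat; lra |].
    rewrite Rmult_assoc, Rinv_r, Rmult_1_r by lra.
    eapply Rlt_le_trans; [apply Hy | apply Rmin_r]. }
  eapply Rle_trans; [apply (Hrem y Hh1) |].
  assert (B * h ^ 2 <= Rabs B * h ^ 2) by (apply Rmult_le_compat_r; [nra | apply Rle_abs]).
  assert (Rabs B * h <= eps) by nra.
  replace (eps * h) with (h * eps) by ring. replace (Rabs B * h ^ 2) with (h * (Rabs B * h)) in * by ring.
  eapply Rle_trans; [eassumption | apply Rmult_le_compat_l; lra].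
Qed.

Lemma is_series_CPSeries_deriv_shift (c : nat -> C) (K : R) (p : nat) (z : C) :
  poly_bounded c K p -> Cmod z < 1 ->
  is_series (fun n => (RtoC (INR n) * c n * pow_n z (pred n))%C) (CPSeries (coef_deriv c) z).
Proof.
  intros Hc Hz. apply is_series_decr_1.
  change (is_series (fun n => (RtoC (INR (S n)) * c (S n) * pow_n z n)%C)
            (CPSeries (coef_deriv c) z - RtoC (INR 0) * c O * pow_n z 0)%C).
  replace (CPSeries (coef_deriv c) z - RtoC (INR 0) * c O * pow_n z 0)%C with (CPSeries (coef_deriv c) z)
    by (simpl INR; ring).
  exact (is_series_CPSeries _ _ _ z (poly_bounded_coef_deriv _ _ _ Hc) Hz).
Qed.

Lemma Cmod_coef_mul_remainder_le (c : nat -> C) (K : R) (p : nat) (r : R) (y z : C) (n : nat) :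
  poly_bounded c K p -> 0 < r -> Cmod y <= r -> Cmod z <= r ->
  Cmod (c n * pow_n_remainder y z n)%C
  <= Cmod (y - z) ^ 2 / r ^ 2 * (K * ((INR n + 1) ^ (p + 2) * r ^ n)).
Proof.
  intros Hc Hr Hy Hz.
  assert (HK := poly_bounded_nonneg _ _ _ Hc).
  assert (Hr2 : 0 < r ^ 2) by (apply pow_lt; lra).
  assert (HE := pow_n_remainder_le y z r n Hr Hy Hz).
  set (h := Cmod (y - z)) in *.
  assert (Hh : 0 <= h) by apply Cmod_ge_0.
  pose proof (pos_INR n).
  rewrite Cmod_mult, pow_add.
  apply Rle_trans with ((K * (INR n + 1) ^ p) * (INR n ^ 2 * r ^ n * h ^ 2 / r ^ 2)).
  - apply Rmult_le_compat; [apply Cmod_ge_0 | apply Cmod_ge_0 | apply Hc |].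
    apply (Rmult_le_reg_l (r ^ 2)); [exact Hr2 |].
    replace (r ^ 2 * (INR n ^ 2 * r ^ n * h ^ 2 / r ^ 2)) with (INR n ^ 2 * r ^ n * h ^ 2)
      by (field; lra).
    exact HE.
  - assert (0 <= K * (INR n + 1) ^ p) by (apply Rmult_le_pos; [lra | apply pow_le; lra]).
    assert (0 <= r ^ n * h ^ 2 / r ^ 2)
      by (apply Rle_mult_inv_pos; [apply Rmult_le_pos; apply pow_le | ]; lra).
    replace (K * (INR n + 1) ^ p * (INR n ^ 2 * r ^ n * h ^ 2 / r ^ 2))
      with (K * (INR n + 1) ^ p * (r ^ n * h ^ 2 / r ^ 2) * INR n ^ 2) by (field; lra).
    replace (h ^ 2 / r ^ 2 * (K * ((INR n + 1) ^ p * (INR n + 1) ^ 2 * r ^ n)))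
      with (K * (INR n + 1) ^ p * (r ^ n * h ^ 2 / r ^ 2) * (INR n + 1) ^ 2) by (field; lra).
    apply Rmult_le_compat_l; [apply Rmult_le_pos; lra | nra].
Qed.

Lemma CPSeries_remainder_le (c : nat -> C) (K : R) (p : nat) (r : R) (y z : C) :
  poly_bounded c K p -> 0 < r < 1 -> Cmod y <= r -> Cmod z <= r ->
  Cmod (CPSeries c y - CPSeries c z - (y - z) * CPSeries (coef_deriv c) z)
  <= Series (fun n => K * ((INR n + 1) ^ (p + 2) * r ^ n)) / r ^ 2 * Cmod (y - z) ^ 2.
Proof.
  intros Hc Hr Hy Hz.
  set (h := Cmod (y - z)).
  set (maj := Series (fun n => K * ((INR n + 1) ^ (p + 2) * r ^ n))).
  assert (Hmaj : is_series (fun n => h ^ 2 / r ^ 2 * (K * ((INR n + 1) ^ (p + 2) * r ^ n)))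
                   (h ^ 2 / r ^ 2 * maj)).
  { apply (is_series_scal (K := R_AbsRing) (V := R_NormedModule)), Series_correct.
    apply (ex_series_scal_l (K := R_AbsRing) (V := R_NormedModule) K).
    apply ex_series_poly_geom. lra. }
  replace (maj / r ^ 2 * h ^ 2) with (h ^ 2 / r ^ 2 * maj) by (field; lra).
  apply (Cmod_series_le (fun n => (c n * pow_n_remainder y z n)%C)
           (fun n => h ^ 2 / r ^ 2 * (K * ((INR n + 1) ^ (p + 2) * r ^ n)))); [| exact Hmaj |].
  - assert (Hyc := is_series_CPSeries c K p y Hc ltac:(lra)).
    assert (Hzc := is_series_CPSeries c K p z Hc ltac:(lra)).
    assert (Hd := is_series_CPSeries_deriv_shift c K p z Hc ltac:(lra)).
    eapply is_series_ext;
      [| exact (is_series_minus _ _ _ _ (is_series_minus _ _ _ _ Hyc Hzc) (is_series_scal (y - z)%C _ _ Hd))].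
    intros n. unfold pow_n_remainder.
    change (c n * pow_n y n + - (c n * pow_n z n) + - ((y - z) * (RtoC (INR n) * c n * pow_n z (pred n)))
            = c n * (pow_n y n - pow_n z n - (y - z) * RtoC (INR n) * pow_n z (pred n)))%C.
    ring.
  - intros n. exact (Cmod_coef_mul_remainder_le c K p r y z n Hc ltac:(lra) Hy Hz).
Qed.

Lemma is_derive_CPSeries (c : nat -> C) (K : R) (p : nat) (z : C) :
  poly_bounded c K p -> Cmod z < 1 -> is_derive (CPSeries c) z (CPSeries (coef_deriv c) z).
Proof.
  intros Hc Hz.
  set (r := (1 + Cmod z) / 2).
  assert (Hz0 := Cmod_ge_0 z).
  apply (is_derive_of_quadratic_remainder _ _ _ (r - Cmod z)
           (Series (fun n => K * ((INR n + 1) ^ (p + 2) * r ^ n)) / r ^ 2)); [unfold r; lra |].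
  intros y Hy. apply CPSeries_remainder_le; [exact Hc | unfold r; lra | | unfold r; lra].
  replace y with (z + (y - z))%C by ring.
  eapply Rle_trans; [apply Cmod_triangle | lra].
Qed.

Lemma locally_disk (z : C) (P : C -> Prop) :
  Cmod z < 1 -> (forall w, Cmod w < 1 -> P w) -> @locally (AbsRing_UniformSpace C_AbsRing) z P.
Proof.
  intros Hz HP.
  apply (locally_le_locally_norm (K := C_AbsRing) (V := AbsRing_NormedModule C_AbsRing)).
  assert (Hd : 0 < 1 - Cmod z) by lra.
  exists (mkposreal _ Hd). intros y Hy. unfold ball_norm in Hy. simpl in Hy.
  change (Cmod (y - z) < 1 - Cmod z) in Hy.
  apply HP. replace y with (z + (y - z))%C by ring.
  eapply Rle_lt_trans; [apply Cmod_triangle | lra].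
Qed.

Lemma taylor_on_disk_CPSeries_eq (c : nat -> C) (K : R) (p : nat) (g : C -> C) (z : C) :
  poly_bounded c K p -> taylor_on_disk c g -> Cmod z < 1 -> g z = CPSeries c z.
Proof. intros Hc Hg Hz. exact (Cis_series_unique _ _ _ (Hg z Hz) (is_series_CPSeries c K p z Hc Hz)). Qed.

Lemma taylor_on_disk_deriv (c : nat -> C) (K : R) (p : nat) (g g1 : C -> C) :
  poly_bounded c K p -> taylor_on_disk c g ->
  (forall z, Cmod z < 1 -> is_derive g z (g1 z)) -> taylor_on_disk (coef_deriv c) g1.
Proof.
  intros Hc Hg Hg1 z Hz.
  assert (Hderiv : is_derive g z (CPSeries (coef_deriv c) z)).
  { eapply is_derive_ext_loc; [| exact (is_derive_CPSeries c K p z Hc Hz)].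
    apply locally_disk; [exact Hz |]. intros w Hw.
    symmetry. exact (taylor_on_disk_CPSeries_eq c K p g w Hc Hg Hw). }
  replace (g1 z) with (CPSeries (coef_deriv c) z).
  - exact (is_series_CPSeries _ _ _ z (poly_bounded_coef_deriv _ _ _ Hc) Hz).
  - rewrite <- (is_C_derive_unique _ _ _ Hderiv). apply is_C_derive_unique, Hg1, Hz.
Qed.

(** * Closed forms of the real majorants *)

(* [is_series_ext] states its equations in a normed-module carrier, where [ring] fails. *)
Lemma is_series_ext_R (a b : nat -> R) (l : R) :
  (forall n, a n = b n) -> is_series a l -> is_series b l.
Proof. apply is_series_ext. Qed.

Lemma is_series_one_sub_mul (a : nat -> R) (r l : R) :
  is_series (fun n => a n * r ^ n) l ->
  is_series (fun n => (a n - match n with O => 0 | S m => a m end) * r ^ n) ((1 - r) * l).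
Proof.
  intros H.
  assert (Hshift : is_series (fun n => match n with O => 0 | S m => a m end * r ^ n) (r * l)).
  { apply is_series_decr_1.
    change (is_series (fun n => a n * r ^ S n) (r * l - 0 * r ^ 0)).
    replace (r * l - 0 * r ^ 0) with (r * l) by ring.
    eapply is_series_ext; [| exact (is_series_scal (K := R_AbsRing) (V := R_NormedModule) r _ _ H)].
    intros n. change (r * (a n * r ^ n) = a n * (r * r ^ n)). ring. }
  replace ((1 - r) * l) with (l - r * l) by ring.
  eapply is_series_ext; [| exact (is_series_minus _ _ _ _ H Hshift)].
  intros n. change (a n * r ^ n - match n with O => 0 | S m => a m end * r ^ n
                    = (a n - match n with O => 0 | S m => a m end) * r ^ n). ring.
Qed.

Lemma is_series_geom_deriv (r : R) : 0 <= r < 1 ->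
  is_series (fun n => (INR n + 1) * r ^ n) (/ (1 - r) ^ 2).
Proof.
  intros Hr.
  assert (Hex : ex_series (fun n => (INR n + 1) * r ^ n)).
  { eapply ex_series_ext; [| exact (ex_series_poly_geom 1 r Hr)]. intros n. simpl. ring. }
  assert (HG := Series_correct _ Hex).
  assert (Hgeom : is_series (fun n => r ^ n) (/ (1 - r)))
    by (apply is_series_geom; rewrite Rabs_pos_eq; lra).
  assert (Hdiff := is_series_one_sub_mul (fun n => INR n + 1) r _ HG).
  replace (/ (1 - r) ^ 2) with (Series (fun n => (INR n + 1) * r ^ n)); [exact HG |].
  apply (Rmult_eq_reg_l (1 - r)); [| lra].
  rewrite <- (is_series_unique _ _ Hdiff).
  replace ((1 - r) * / (1 - r) ^ 2) with (/ (1 - r)) by (field; lra).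
  apply is_series_unique.
  eapply is_series_ext_R; [| exact Hgeom]. intros [|n]; [simpl; ring | rewrite S_INR; ring].
Qed.

Lemma is_series_geom_deriv2 (r : R) : 0 <= r < 1 ->
  is_series (fun n => (INR n + 1) * (INR n + 2) * r ^ n) (2 / (1 - r) ^ 3).
Proof.
  intros Hr.
  assert (Hex : ex_series (fun n => (INR n + 1) * (INR n + 2) * r ^ n)).
  { apply (ex_series_le (K := R_AbsRing) (V := R_CompleteNormedModule) _
             (fun n => 2 * ((INR n + 1) ^ 2 * r ^ n))).
    - intros n. change norm with Rabs. pose proof (pos_INR n).
      assert (0 <= r ^ n) by (apply pow_le; lra).
      rewrite Rabs_pos_eq by (apply Rmult_le_pos; nra). simpl. nra.
    - apply (ex_series_scal_l (K := R_AbsRing) (V := R_NormedModule) 2), ex_series_poly_geom, Hr. }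
  assert (HH := Series_correct _ Hex).
  assert (HG : is_series (fun n => 2 * ((INR n + 1) * r ^ n)) (2 * / (1 - r) ^ 2))
    by exact (is_series_scal (K := R_AbsRing) (V := R_NormedModule) 2 _ _ (is_series_geom_deriv r Hr)).
  assert (Hdiff := is_series_one_sub_mul (fun n => (INR n + 1) * (INR n + 2)) r _ HH).
  replace (2 / (1 - r) ^ 3) with (Series (fun n => (INR n + 1) * (INR n + 2) * r ^ n)); [exact HH |].
  apply (Rmult_eq_reg_l (1 - r)); [| lra].
  rewrite <- (is_series_unique _ _ Hdiff).
  replace ((1 - r) * (2 / (1 - r) ^ 3)) with (2 * / (1 - r) ^ 2) by (field; lra).
  apply is_series_unique.
  eapply is_series_ext_R; [| exact HG]. intros [|n]; [simpl; ring | rewrite !S_INR; ring].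
Qed.

(** * Coefficient estimates for the class *)

Definition deriv_dev_bound (b M r : R) : R := 4 * b * r + M * (/ (1 - r) ^ 2 - 1 - 2 * r).

Definition deriv2_bound (b M r : R) : R := 4 * b * r + M * r * (2 / (1 - r) ^ 3 - 2).

Lemma Cmod_INR (n : nat) : Cmod (RtoC (INR n)) = INR n.
Proof. rewrite Cmod_R. apply Rabs_pos_eq, pos_INR. Qed.

Section CoefficientBounds.

Variables (b M : R) (a : nat -> C).
Hypothesis Ha1 : a 1%nat = RtoC 1.
Hypothesis Ha2 : Cmod (a 2%nat) = 2 * b.
Hypothesis HaM : forall n, (3 <= n)%nat -> Cmod (a n) <= M.

Lemma Cmod_deriv_sub_one_le (g1 : C -> C) (z : C) :
  taylor_on_disk (coef_deriv a) g1 -> Cmod z < 1 ->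
  Cmod (g1 z - 1) <= deriv_dev_bound b M (Cmod z).
Proof.
  intros Hg1 Hz. set (r := Cmod z).
  assert (Hr : 0 <= r < 1) by (split; [apply Cmod_ge_0 | exact Hz]).
  assert (HG : is_series (fun n => M * ((INR n + 1) * r ^ n)) (M * / (1 - r) ^ 2))
    by exact (is_series_scal (K := R_AbsRing) (V := R_NormedModule) M _ _ (is_series_geom_deriv r Hr)).
  assert (Hterm : forall n, Cmod (coef_deriv a (2 + n) * pow_n z (2 + n))
                            <= M * ((INR (2 + n) + 1) * r ^ (2 + n))).
  { intros n. unfold coef_deriv. rewrite !Cmod_mult, Cmod_INR, Cmod_pow_n, S_INR. fold r.
    pose proof (pos_INR (2 + n)).
    assert (0 <= r ^ (2 + n)) by (apply pow_le; lra).
    assert (Cmod (a (S (2 + n))) <= M) by (apply HaM; lia).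
    pose proof (Cmod_ge_0 (a (S (2 + n)))).
    replace (M * ((INR (2 + n) + 1) * r ^ (2 + n)))
      with ((INR (2 + n) + 1) * M * r ^ (2 + n)) by ring.
    apply Rmult_le_compat_r; [lra |]. apply Rmult_le_compat_l; lra. }
  assert (Htail := Cmod_series_tail_le _ _ _ _ 2 ltac:(lia) (Hg1 z Hz) HG Hterm).
  simpl pred in Htail. rewrite !sum_Sn, !sum_O in Htail.
  replace (plus (coef_deriv a 0 * pow_n z 0)%C (coef_deriv a 1 * pow_n z 1)%C)
    with (1 + RtoC (INR 2) * a 2%nat * z)%C in Htail.
  2:{ unfold coef_deriv. rewrite Ha1. change (pow_n z 0) with (RtoC 1).
      change (pow_n z 1) with (z * 1)%C. change plus with Cplus. change (INR 1) with 1. ring. }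
  replace (plus (M * ((INR 0 + 1) * r ^ 0)) (M * ((INR 1 + 1) * r ^ 1)))
    with (M * (1 + 2 * r)) in Htail by (change plus with Rplus; simpl; ring).
  replace (g1 z - 1)%C
    with ((g1 z - (1 + RtoC (INR 2) * a 2%nat * z)) + RtoC (INR 2) * a 2%nat * z)%C by ring.
  eapply Rle_trans; [apply Cmod_triangle |].
  rewrite !Cmod_mult, Cmod_INR, Ha2. fold r.
  replace (INR 2 * (2 * b) * r) with (4 * b * r) by (simpl; ring).
  unfold deriv_dev_bound. lra.
Qed.

Lemma Cmod_mul_deriv2_le (g2 : C -> C) (z : C) :
  taylor_on_disk (coef_deriv (coef_deriv a)) g2 -> Cmod z < 1 ->
  Cmod (z * g2 z) <= deriv2_bound b M (Cmod z).
Proof.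
  intros Hg2 Hz. set (r := Cmod z).
  assert (Hr : 0 <= r < 1) by (split; [apply Cmod_ge_0 | exact Hz]).
  assert (HH : is_series (fun n => M * ((INR n + 1) * (INR n + 2) * r ^ n)) (M * (2 / (1 - r) ^ 3)))
    by exact (is_series_scal (K := R_AbsRing) (V := R_NormedModule) M _ _ (is_series_geom_deriv2 r Hr)).
  assert (Hterm : forall n, Cmod (coef_deriv (coef_deriv a) (1 + n) * pow_n z (1 + n))
                            <= M * ((INR (1 + n) + 1) * (INR (1 + n) + 2) * r ^ (1 + n))).
  { intros n. set (m := (1 + n)%nat).
    unfold coef_deriv. rewrite !Cmod_mult, !Cmod_INR, Cmod_pow_n, !S_INR. fold r.
    pose proof (pos_INR m).
    assert (0 <= r ^ m) by (apply pow_le; lra).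
    assert (Cmod (a (S (S m))) <= M) by (apply HaM; unfold m; lia).
    pose proof (Cmod_ge_0 (a (S (S m)))).
    replace (M * ((INR m + 1) * (INR m + 2) * r ^ m))
      with ((INR m + 1) * ((INR m + 1 + 1) * M) * r ^ m) by ring.
    apply Rmult_le_compat_r; [lra |]. apply Rmult_le_compat_l; [lra |].
    apply Rmult_le_compat_l; lra. }
  assert (Htail := Cmod_series_tail_le _ _ _ _ 1 ltac:(lia) (Hg2 z Hz) HH Hterm).
  simpl pred in Htail. rewrite !sum_O in Htail.
  replace (coef_deriv (coef_deriv a) 0 * pow_n z 0)%C with (RtoC (INR 2) * a 2%nat)%C in Htail
    by (unfold coef_deriv; change (pow_n z 0) with (RtoC 1); change (INR 1) with 1; ring).
  replace (M * ((INR 0 + 1) * (INR 0 + 2) * r ^ 0)) with (M * 2) in Htail by (simpl; ring).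
  replace (z * g2 z)%C with (z * (g2 z - RtoC (INR 2) * a 2%nat) + z * (RtoC (INR 2) * a 2%nat))%C
    by ring.
  eapply Rle_trans; [apply Cmod_triangle |].
  rewrite !Cmod_mult, Cmod_INR, Ha2. fold r.
  replace (r * (INR 2 * (2 * b))) with (4 * b * r) by (simpl; ring).
  unfold deriv2_bound.
  assert (r * Cmod (g2 z - RtoC (INR 2) * a 2%nat) <= r * (M * (2 / (1 - r) ^ 3) - M * 2))
    by (apply Rmult_le_compat_l; lra).
  lra.
Qed.

End CoefficientBounds.

Lemma taylor_on_disk_derivs (c : nat -> C) (K : R) (p : nat) (f f1 f2 : C -> C) :
  poly_bounded c K p -> taylor_on_disk c f -> derivs_on_disk f f1 f2 ->
  taylor_on_disk (coef_deriv c) f1 /\ taylor_on_disk (coef_deriv (coef_deriv c)) f2.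
Proof.
  intros Hc Hf Hd.
  assert (Hf1 : taylor_on_disk (coef_deriv c) f1)
    by (apply (taylor_on_disk_deriv c K p f); [exact Hc | exact Hf | intros z Hz; apply Hd, Hz]).
  split; [exact Hf1 |].
  apply (taylor_on_disk_deriv _ _ _ f1 f2 (poly_bounded_coef_deriv _ _ _ Hc) Hf1).
  intros z Hz. apply Hd, Hz.
Qed.

Definition r0_poly (b M alpha r : R) : R :=
  ((1 - alpha) * (1 + M) - 2 * (2 - alpha) * (2 * b - M) * r) * (1 - r) ^ 3
  - M * (1 - alpha + (1 + alpha) * r).

Lemma r0_poly_div b M alpha r : r < 1 ->
  (1 - alpha) * (1 - deriv_dev_bound b M r) - deriv2_bound b M r = r0_poly b M alpha r / (1 - r) ^ 3.
Proof. intros Hr. unfold deriv_dev_bound, deriv2_bound, r0_poly. field. lra. Qed.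

Lemma r0_poly_root b M alpha r0 : is_r0 b M alpha r0 -> r0_poly b M alpha r0 = 0.
Proof. intros [_ [H _]]. unfold r0_eq in H. unfold r0_poly. lra. Qed.

(* Intermediate values: [r0_poly] is [1 - alpha > 0] at [0] and has no root in [(0, r0)]. *)
Lemma r0_poly_pos b M alpha r0 r : 0 <= alpha < 1 -> is_r0 b M alpha r0 ->
  0 <= r < r0 -> 0 < r0_poly b M alpha r.
Proof.
  intros Ha [Hr0 [_ Hmin]] Hr.
  destruct (Rlt_or_le 0 (r0_poly b M alpha r)) as [Hpos | Hnpos]; [exact Hpos | exfalso].
  assert (Hcont : continuity (r0_poly b M alpha)).
  { intros x. apply continuity_pt_filterlim.
    apply (ex_derive_continuous (K := R_AbsRing) (V := R_NormedModule)).
    unfold r0_poly. auto_derive. exact I. }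
  assert (H0 : r0_poly b M alpha 0 = 1 - alpha) by (unfold r0_poly; ring).
  destruct (IVT_cor _ 0 r Hcont ltac:(lra)) as [x [Hx Hroot]]; [rewrite H0; nra |].
  assert (x <> 0) by (intros ->; lra).
  apply (Hmin x); [lra |]. unfold r0_eq. unfold r0_poly in Hroot. lra.
Qed.

Lemma r0_poly_nonneg b M alpha r0 r : 0 <= alpha < 1 -> is_r0 b M alpha r0 ->
  0 <= r <= r0 -> 0 <= r0_poly b M alpha r.
Proof.
  intros Ha H0 Hr. destruct (Req_dec r r0) as [-> | Hne].
  - rewrite (r0_poly_root _ _ _ _ H0). lra.
  - apply Rlt_le, (r0_poly_pos b M alpha r0); [exact Ha | exact H0 | lra].
Qed.

Lemma deriv2_bound_pos b M r : 0 <= b -> 0 < M -> 0 < r < 1 -> 0 < deriv2_bound b M r.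
Proof.
  intros Hb HM Hr. unfold deriv2_bound.
  assert (Hcube : 0 < (1 - r) ^ 3 < 1).
  { split; [apply pow_lt; lra |].
    replace ((1 - r) ^ 3) with ((1 - r) * ((1 - r) * (1 - r))) by ring.
    assert (0 < 1 - r < 1) by lra. nra. }
  assert (2 < 2 / (1 - r) ^ 3).
  { apply (Rmult_lt_reg_r ((1 - r) ^ 3)); [lra |].
    unfold Rdiv. rewrite Rmult_assoc, Rinv_l by lra. nra. }
  assert (0 < M * r * (2 / (1 - r) ^ 3 - 2)) by (apply Rmult_lt_0_compat; nra).
  nra.
Qed.

Section DerivativeBounds.

Variables (b M alpha r : R).
Hypotheses (Hb : 0 <= b) (HM : 0 < M) (Ha : 0 <= alpha < 1) (Hr : 0 <= r < 1).

Lemma deriv_bounds_gap : 0 <= r0_poly b M alpha r ->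
  deriv2_bound b M r <= (1 - alpha) * (1 - deriv_dev_bound b M r).
Proof.
  intros HP. pose proof (r0_poly_div b M alpha r ltac:(lra)) as E.
  assert (0 <= r0_poly b M alpha r / (1 - r) ^ 3)
    by (apply Rle_mult_inv_pos; [exact HP | apply pow_lt; lra]).
  lra.
Qed.

Lemma one_sub_deriv_dev_bound_pos : 0 <= r0_poly b M alpha r -> 0 < 1 - deriv_dev_bound b M r.
Proof.
  intros HP. pose proof (deriv_bounds_gap HP).
  destruct (Req_dec r 0) as [-> | Hr0].
  - unfold deriv_dev_bound. rewrite Rminus_0_r, pow1. lra.
  - pose proof (deriv2_bound_pos b M r Hb HM ltac:(lra)). nra.
Qed.

Lemma deriv_ratio_bound_le : 0 <= r0_poly b M alpha r ->
  deriv2_bound b M r / (1 - deriv_dev_bound b M r) <= 1 - alpha.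
Proof.
  intros HP. pose proof (one_sub_deriv_dev_bound_pos HP). pose proof (deriv_bounds_gap HP).
  apply (Rmult_le_reg_r (1 - deriv_dev_bound b M r)); [lra |].
  unfold Rdiv. rewrite Rmult_assoc, Rinv_l, Rmult_1_r by lra. lra.
Qed.

Lemma deriv_ratio_bound_lt : 0 < r0_poly b M alpha r ->
  deriv2_bound b M r / (1 - deriv_dev_bound b M r) < 1 - alpha.
Proof.
  intros HP. pose proof (one_sub_deriv_dev_bound_pos ltac:(lra)).
  pose proof (r0_poly_div b M alpha r ltac:(lra)) as E.
  assert (0 < r0_poly b M alpha r / (1 - r) ^ 3) by (apply Rdiv_lt_0_compat; [lra | apply pow_lt; lra]).
  apply (Rmult_lt_reg_r (1 - deriv_dev_bound b M r)); [lra |].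
  unfold Rdiv. rewrite Rmult_assoc, Rinv_l, Rmult_1_r by lra. lra.
Qed.

End DerivativeBounds.

Lemma class_F_poly_bounded b M (a : nat -> C) : 0 <= b <= 1 -> 0 < M ->
  a 0%nat = RtoC 0 -> a 1%nat = RtoC 1 -> Cmod (a 2%nat) = 2 * b ->
  (forall n, (3 <= n)%nat -> Cmod (a n) <= M) -> poly_bounded a (2 + M) 0.
Proof.
  intros Hb HM H0 H1 H2 H3 n. simpl. rewrite Rmult_1_r.
  destruct n as [|[|[|n]]].
  - rewrite H0, Cmod_0. lra.
  - rewrite H1, Cmod_1. lra.
  - lra.
  - assert (Cmod (a (S (S (S n)))) <= M) by (apply H3; lia). lra.
Qed.

Lemma class_F_ratio_le_majorants b M (f f1 f2 : C -> C) (z : C) : 0 <= b <= 1 -> 0 < M ->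
  class_F b M f -> derivs_on_disk f f1 f2 -> Cmod z < 1 ->
  0 < 1 - deriv_dev_bound b M (Cmod z) ->
  f1 z <> RtoC 0 /\
  Cmod (z * f2 z / f1 z)%C <= deriv2_bound b M (Cmod z) / (1 - deriv_dev_bound b M (Cmod z)).
Proof.
  intros Hb HM [a [Hf [H0 [H1 [H2 H3]]]]] Hd Hz HD.
  assert (Hbd := class_F_poly_bounded b M a Hb HM H0 H1 H2 H3).
  destruct (taylor_on_disk_derivs a _ _ f f1 f2 Hbd Hf Hd) as [Hf1 Hf2].
  assert (B1 := Cmod_deriv_sub_one_le b M a H1 H2 H3 f1 z Hf1 Hz).
  assert (B2 := Cmod_mul_deriv2_le b M a H2 H3 f2 z Hf2 Hz).
  assert (Hf1z : 1 - deriv_dev_bound b M (Cmod z) <= Cmod (f1 z)).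
  { assert (Hle : Cmod (RtoC 1) <= Cmod (f1 z) + Cmod (RtoC 1 - f1 z)).
    { replace (RtoC 1) with (f1 z + (RtoC 1 - f1 z))%C at 1 by ring. apply Cmod_triangle. }
    rewrite Cmod_1 in Hle. replace (RtoC 1 - f1 z)%C with (- (f1 z - 1))%C in Hle by ring.
    rewrite Cmod_opp in Hle. lra. }
  assert (Hnz : f1 z <> RtoC 0) by (intros E; rewrite E, Cmod_0 in Hf1z; lra).
  split; [exact Hnz |].
  rewrite Cmod_div by exact Hnz. unfold Rdiv.
  apply Rmult_le_compat; [apply Cmod_ge_0 | left; apply Rinv_0_lt_compat; lra | exact B2 |].
  apply Rinv_le_contravar; lra.
Qed.

Section ClassF.

Variables (b M alpha r0 : R).
Hypotheses (hb : 0 <= b <= 1) (hM : 0 < M) (ha : 0 <= alpha < 1) (hr0 : is_r0 b M alpha r0).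

Lemma class_F_ratio_le (f f1 f2 : C -> C) (z : C) :
  class_F b M f -> derivs_on_disk f f1 f2 -> Cmod z <= r0 ->
  f1 z <> RtoC 0 /\ Cmod (z * f2 z / f1 z)%C <= 1 - alpha.
Proof.
  intros Hf Hd Hz. destruct hr0 as [Hr0 _].
  assert (Hz0 := Cmod_ge_0 z).
  assert (HP := r0_poly_nonneg b M alpha r0 (Cmod z) ha hr0 ltac:(lra)).
  destruct (class_F_ratio_le_majorants b M f f1 f2 z hb hM Hf Hd ltac:(lra)
              (one_sub_deriv_dev_bound_pos b M alpha (Cmod z) ltac:(lra) hM ha ltac:(lra) HP))
    as [Hnz Hle].
  split; [exact Hnz |].
  eapply Rle_trans; [exact Hle | exact (deriv_ratio_bound_le b M alpha (Cmod z) ltac:(lra) hM ha ltac:(lra) HP)].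
Qed.

Lemma class_F_ratio_lt (f f1 f2 : C -> C) (z : C) :
  class_F b M f -> derivs_on_disk f f1 f2 -> Cmod z < r0 ->
  f1 z <> RtoC 0 /\ Cmod (z * f2 z / f1 z)%C < 1 - alpha.
Proof.
  intros Hf Hd Hz. destruct hr0 as [Hr0 _].
  assert (Hz0 := Cmod_ge_0 z).
  assert (HP := r0_poly_pos b M alpha r0 (Cmod z) ha hr0 ltac:(lra)).
  destruct (class_F_ratio_le_majorants b M f f1 f2 z hb hM Hf Hd ltac:(lra)
              (one_sub_deriv_dev_bound_pos b M alpha (Cmod z) ltac:(lra) hM ha ltac:(lra) ltac:(lra)))
    as [Hnz Hle].
  split; [exact Hnz |].
  eapply Rle_lt_trans; [exact Hle | exact (deriv_ratio_bound_lt b M alpha (Cmod z) ltac:(lra) hM ha ltac:(lra) HP)].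
Qed.

End ClassF.

(** * The extremal function *)

Definition f0_coef (b M : R) (n : nat) : C :=
  match n with 0 => RtoC 0 | 1 => RtoC 1 | 2 => RtoC (- (2 * b)) | _ => RtoC (- M) end.

Lemma one_sub_neq_0 (z : C) : Cmod z < 1 -> (1 - z)%C <> RtoC 0.
Proof.
  intros Hz H. assert (z = RtoC 1) by (replace z with (1 - (1 - z))%C by ring; rewrite H; ring).
  subst z. rewrite Cmod_1 in Hz. lra.
Qed.

Lemma is_series_geom_C (z : C) : Cmod z < 1 -> is_series (fun n => pow_n z n) (/ (1 - z))%C.
Proof.
  intros Hz.
  assert (Hone : poly_bounded (fun _ => RtoC 1) 1 0) by (intros n; rewrite Cmod_1; simpl; lra).
  assert (HS := is_series_CPSeries _ _ _ z Hone Hz).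
  set (s := CPSeries (fun _ => RtoC 1) z) in HS.
  assert (HS' : is_series (fun n => pow_n z n) s)
    by (eapply is_series_ext; [| exact HS]; intros n; apply Cmult_1_l).
  assert (Hshift : (s - 1)%C = (z * s)%C).
  { apply (Cis_series_unique (fun n => pow_n z (S n))).
    - apply is_series_incr_1. change (is_series (fun n => pow_n z n) ((s - 1) + 1)%C).
      replace ((s - 1) + 1)%C with s by ring. exact HS'.
    - exact (is_series_scal z _ _ HS'). }
  replace (/ (1 - z))%C with s; [exact HS' |].
  assert (Hnz := one_sub_neq_0 z Hz).
  assert (Hprod : ((1 - z) * s)%C = RtoC 1)
    by (replace ((1 - z) * s)%C with (s - z * s)%C by ring; rewrite <- Hshift; ring).
  replace s with (/ (1 - z) * ((1 - z) * s))%C by (field; exact Hnz).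
  rewrite Hprod. ring.
Qed.

Lemma taylor_on_disk_f0 b M : taylor_on_disk (f0_coef b M) (f0 b M).
Proof.
  intros z Hz. apply is_series_decr_n with 3%nat; [lia |].
  (* beyond the cubic term, [f0_coef] is the geometric series of [- M z^3 / (1 - z)] *)
  assert (Htail := is_series_scal (RtoC (- M) * pow_n z 3)%C _ _ (is_series_geom_C z Hz)).
  eapply is_series_ext; [| replace (plus (f0 b M z) _) with (scal (RtoC (- M) * pow_n z 3)%C (/ (1 - z))%C);
                           [exact Htail |]].
  - intros n. rewrite pow_n_plus.
    change (RtoC (- M) * pow_n z 3 * pow_n z n = RtoC (- M) * (pow_n z 3 * pow_n z n))%C. ring.
  - simpl pred. rewrite !sum_Sn, sum_O.
    pose proof (one_sub_neq_0 z Hz).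
    unfold f0. simpl.
    change (RtoC (- M) * (z * (z * (z * 1))) * / (1 - z)
            = (z - RtoC (2 * b) * z * z - RtoC M * (z * z * z) / (1 - z))
              + - ((RtoC 0 * 1 + RtoC 1 * (z * 1)) + RtoC (- (2 * b)) * (z * (z * 1))))%C.
    rewrite !RtoC_opp. field. assumption.
Qed.

Lemma f0_coef_bounds b M : 0 <= b -> 0 < M ->
  Cmod (f0_coef b M 2) = 2 * b /\ (forall n, (3 <= n)%nat -> Cmod (f0_coef b M n) <= M).
Proof.
  intros Hb HM. split.
  - simpl. rewrite Cmod_R, Rabs_Ropp, Rabs_pos_eq; lra.
  - intros n Hn. destruct n as [|[|[|n]]]; try lia. simpl. rewrite Cmod_R, Rabs_Ropp, Rabs_pos_eq; lra.
Qed.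

Lemma class_F_f0 b M : 0 <= b -> 0 < M -> class_F b M (f0 b M).
Proof.
  intros Hb HM. destruct (f0_coef_bounds b M Hb HM) as [H2 H3].
  exists (f0_coef b M). repeat split; [apply taylor_on_disk_f0 | exact H2 | exact H3].
Qed.

Lemma f0_coef_poly_bounded b M : 0 <= b <= 1 -> 0 < M -> poly_bounded (f0_coef b M) (2 + M) 0.
Proof.
  intros Hb HM. destruct (f0_coef_bounds b M ltac:(lra) HM) as [H2 H3].
  exact (class_F_poly_bounded b M _ Hb HM eq_refl eq_refl H2 H3).
Qed.

Lemma derivs_on_disk_f0 b M : 0 <= b <= 1 -> 0 < M ->
  derivs_on_disk (f0 b M) (CPSeries (coef_deriv (f0_coef b M))) (CPSeries (coef_deriv (coef_deriv (f0_coef b M)))).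
Proof.
  intros Hb HM z Hz. assert (Hc := f0_coef_poly_bounded b M Hb HM). split.
  - eapply is_derive_ext_loc; [| exact (is_derive_CPSeries _ _ _ z Hc Hz)].
    apply locally_disk; [exact Hz |]. intros w Hw.
    symmetry. exact (taylor_on_disk_CPSeries_eq _ _ _ _ w Hc (taylor_on_disk_f0 b M) Hw).
  - exact (is_derive_CPSeries _ _ _ z (poly_bounded_coef_deriv _ _ _ Hc) Hz).
Qed.

Section ExtremalValues.

Variables (b M x : R).
Hypothesis Hx : 0 <= x < 1.

Let Hx_disk : Cmod (RtoC x) < 1.
Proof. rewrite Cmod_R, Rabs_pos_eq; lra. Qed.

Lemma f0_deriv_at_real (g1 : C -> C) :
  taylor_on_disk (coef_deriv (f0_coef b M)) g1 -> g1 (RtoC x) = RtoC (1 - deriv_dev_bound b M x).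
Proof.
  intros Hg1. apply (Cis_series_unique _ _ _ (Hg1 _ Hx_disk)).
  assert (HG : is_series (fun k => (INR (2 + k) + 1) * x ^ (2 + k)) (/ (1 - x) ^ 2 - 1 - 2 * x)).
  { apply (is_series_incr_n (fun k => (INR k + 1) * x ^ k) 2); [lia |]. simpl pred. rewrite sum_Sn, sum_O.
    replace (plus _ _) with (/ (1 - x) ^ 2) by (change plus with Rplus; simpl; ring).
    exact (is_series_geom_deriv x Hx). }
  assert (HMG := RtoC_is_series _ _ (is_series_scal (K := R_AbsRing) (V := R_NormedModule) (- M) _ _ HG)).
  apply is_series_decr_n with 2%nat; [lia |].
  simpl pred. rewrite sum_Sn, sum_O.
  eapply is_series_ext; [| replace (plus _ _) with (RtoC (scal (- M) (/ (1 - x) ^ 2 - 1 - 2 * x)));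
                           [exact HMG |]].
  - intros n. rewrite pow_n_RtoC. unfold coef_deriv.
    change (f0_coef b M (S (2 + n))) with (RtoC (- M)).
    change (scal (- M) ?y) with (- M * y). rewrite <- !RtoC_mult. f_equal. rewrite S_INR. ring.
  - change (scal (- M) ?y) with (- M * y). change plus with Cplus. change opp with Copp.
    rewrite !pow_n_RtoC. unfold coef_deriv, deriv_dev_bound. simpl f0_coef.
    rewrite <- !RtoC_mult, <- RtoC_plus, <- RtoC_opp, <- RtoC_plus. f_equal. simpl. field. lra.
Qed.

Lemma f0_deriv2_at_real (g2 : C -> C) :
  taylor_on_disk (coef_deriv (coef_deriv (f0_coef b M))) g2 ->
  (RtoC x * g2 (RtoC x))%C = RtoC (- deriv2_bound b M x).
Proof.
  intros Hg2.
  assert (HH : is_series (fun k => (INR (1 + k) + 1) * (INR (1 + k) + 2) * x ^ (1 + k))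
                 (2 / (1 - x) ^ 3 - 2)).
  { apply (is_series_incr_n (fun k => (INR k + 1) * (INR k + 2) * x ^ k) 1); [lia |].
    simpl pred. rewrite sum_O.
    replace (plus _ _) with (2 / (1 - x) ^ 3) by (change plus with Rplus; simpl; ring).
    exact (is_series_geom_deriv2 x Hx). }
  assert (HMH := RtoC_is_series _ _ (is_series_scal (K := R_AbsRing) (V := R_NormedModule) (- M) _ _ HH)).
  assert (Hval : g2 (RtoC x) = RtoC (- (4 * b) - M * (2 / (1 - x) ^ 3 - 2))).
  { apply (Cis_series_unique _ _ _ (Hg2 _ Hx_disk)).
    apply is_series_decr_n with 1%nat; [lia |].
    simpl pred. rewrite sum_O.
    eapply is_series_ext; [| replace (plus _ _) with (RtoC (scal (- M) (2 / (1 - x) ^ 3 - 2)));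
                             [exact HMH |]].
    - intros n. rewrite pow_n_RtoC. unfold coef_deriv.
      change (f0_coef b M (S (S (1 + n)))) with (RtoC (- M)).
      change (scal (- M) ?y) with (- M * y). rewrite <- !RtoC_mult. f_equal. rewrite !S_INR. ring.
    - change (scal (- M) ?y) with (- M * y). change plus with Cplus. change opp with Copp.
      rewrite pow_n_RtoC. unfold coef_deriv. simpl f0_coef.
      rewrite <- !RtoC_mult, <- RtoC_opp, <- RtoC_plus. f_equal. simpl. ring. }
  rewrite Hval, <- RtoC_mult. f_equal. unfold deriv2_bound. ring.
Qed.

End ExtremalValues.

Lemma f0_ratio_at_r0 b M alpha r0 (f1 f2 : C -> C) :
  0 <= b <= 1 -> 0 < M -> 0 <= alpha < 1 -> is_r0 b M alpha r0 ->
  derivs_on_disk (f0 b M) f1 f2 ->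
  f1 (RtoC r0) <> RtoC 0 /\ (RtoC r0 * f2 (RtoC r0) / f1 (RtoC r0))%C = RtoC (- (1 - alpha)).
Proof.
  intros Hb HM Ha Hr0 Hd. pose proof Hr0 as [Hr0_range _].
  destruct (taylor_on_disk_derivs _ _ _ _ f1 f2 (f0_coef_poly_bounded b M Hb HM)
              (taylor_on_disk_f0 b M) Hd) as [Hf1 Hf2].
  rewrite (f0_deriv_at_real b M r0 ltac:(lra) f1 Hf1).
  assert (HP := r0_poly_root b M alpha r0 Hr0).
  assert (HD := one_sub_deriv_dev_bound_pos b M alpha r0 ltac:(lra) HM Ha ltac:(lra) ltac:(lra)).
  (* at the root, the two coefficient estimates are in the exact ratio [1 - alpha] *)
  assert (Hgap := r0_poly_div b M alpha r0 ltac:(lra)).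
  rewrite HP in Hgap. unfold Rdiv in Hgap. rewrite Rmult_0_l in Hgap.
  split; [intros E; apply RtoC_inj in E; lra |].
  unfold Cdiv. rewrite (f0_deriv2_at_real b M r0 ltac:(lra) f2 Hf2), <- RtoC_inv, <- RtoC_mult.
  - f_equal. replace (deriv2_bound b M r0) with ((1 - alpha) * (1 - deriv_dev_bound b M r0)) by lra.
    field. lra.
  - lra.
Qed.

(** * Radii *)

Lemma Lub_Rbar_max (E : R -> Prop) (r : R) :
  E r -> (forall x, E x -> x <= r) -> Lub_Rbar E = Finite r.
Proof.
  intros Hr Hmax. apply is_lub_Rbar_unique. split.
  - intros x Ex. exact (Hmax x Ex).
  - intros l Hl. exact (Hl r Hr).
Qed.

Lemma one_sub_Cmod_le_Re (w : C) : 1 - Cmod w <= Re (1 + w)%C.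
Proof.
  pose proof (re_le_Cmod w) as H. apply Rabs_le_between in H.
  change (Re (1 + w)%C) with (1 + Re w). lra.
Qed.

Section Radii.

Variables (b M : R).
Hypotheses (hb : 0 <= b <= 1) (hM : 0 < M).

Lemma radius_convexity_class_F alpha r0 : 0 <= alpha < 1 -> is_r0 b M alpha r0 ->
  radius_convexity (class_F b M) alpha = Finite r0.
Proof.
  intros ha hr0. pose proof hr0 as [Hr0 _]. apply Lub_Rbar_max.
  - split; [lra |]. intros f f1 f2 Hf Hd z Hz.
    destruct (class_F_ratio_lt b M alpha r0 hb hM ha hr0 f f1 f2 z Hf Hd Hz) as [Hnz Hlt].
    split; [exact Hnz |]. pose proof (one_sub_Cmod_le_Re (z * f2 z / f1 z)). lra.
  - intros r [_ Hconv]. destruct (Rle_or_lt r r0) as [Hle | Hgt]; [exact Hle | exfalso].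
    pose proof (derivs_on_disk_f0 b M hb hM) as Hd.
    destruct (f0_ratio_at_r0 b M alpha r0 _ _ hb hM ha hr0 Hd) as [_ Hw].
    destruct (Hconv _ _ _ (class_F_f0 b M ltac:(lra) hM) Hd (RtoC r0)) as [_ Hre];
      [rewrite Cmod_R, Rabs_pos_eq; lra |].
    rewrite Hw, <- RtoC_plus, re_RtoC in Hre. lra.
Qed.

Lemma radius_unif_convexity_class_F r0half : is_r0 b M (1 / 2) r0half ->
  radius_unif_convexity (class_F b M) = Finite r0half.
Proof.
  intros hr0. pose proof hr0 as [Hr0 _]. assert (ha : 0 <= 1 / 2 < 1) by lra.
  apply Lub_Rbar_max.
  - split; [lra |]. intros f f1 f2 Hf Hd z Hz.
    destruct (class_F_ratio_lt b M (1 / 2) r0half hb hM ha hr0 f f1 f2 z Hf Hd Hz) as [Hnz Hlt].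
    split; [exact Hnz |]. pose proof (one_sub_Cmod_le_Re (z * f2 z / f1 z)). lra.
  - intros r [_ Hconv]. destruct (Rle_or_lt r r0half) as [Hle | Hgt]; [exact Hle | exfalso].
    pose proof (derivs_on_disk_f0 b M hb hM) as Hd.
    destruct (f0_ratio_at_r0 b M (1 / 2) r0half _ _ hb hM ha hr0 Hd) as [_ Hw].
    destruct (Hconv _ _ _ (class_F_f0 b M ltac:(lra) hM) Hd (RtoC r0half)) as [_ Hre];
      [rewrite Cmod_R, Rabs_pos_eq; lra |].
    rewrite Hw, <- RtoC_plus, re_RtoC, Cmod_R, Rabs_left in Hre; lra.
Qed.

End Radii.

Theorem theorem3p6 (b M alpha r0 r0half : R)
  (hb : 0 <= b <= 1) (hM : 0 < M) (ha : 0 <= alpha < 1)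
  (hr0 : is_r0 b M alpha r0) (hr0half : is_r0 b M (1 / 2) r0half) :
  (forall f f1 f2 : C -> C, class_F b M f -> derivs_on_disk f f1 f2 ->
     forall z : C, Cmod z <= r0 ->
       f1 z <> 0%C /\ Cmod (z * f2 z / f1 z)%C <= 1 - alpha) /\
  radius_convexity (class_F b M) alpha = Finite r0 /\
  radius_unif_convexity (class_F b M) = Finite r0half /\
  (class_F b M (f0 b M) /\
   forall f1 f2 : C -> C, derivs_on_disk (f0 b M) f1 f2 ->
     f1 (RtoC r0) <> 0%C /\
     Cmod (RtoC r0 * f2 (RtoC r0) / f1 (RtoC r0))%C = 1 - alpha).
Proof.
  split; [| split; [| split; [| split]]].
  - intros f f1 f2 Hf Hd z Hz. exact (class_F_ratio_le b M alpha r0 hb hM ha hr0 f f1 f2 z Hf Hd Hz).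
  - exact (radius_convexity_class_F b M hb hM alpha r0 ha hr0).
  - exact (radius_unif_convexity_class_F b M hb hM r0half hr0half).
  - apply class_F_f0; lra.
  - intros f1 f2 Hd.
    destruct (f0_ratio_at_r0 b M alpha r0 f1 f2 hb hM ha hr0 Hd) as [Hnz Hw].
    split; [exact Hnz |]. rewrite Hw, Cmod_R, Rabs_Ropp, Rabs_pos_eq; lra.
Qed.
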